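(* Let $d \ge 2$, let $P\colon\mathbb{R}\to\mathbb{R}^d$ be a polynomial, $K \geq 0$ an integer, $I = (a,b)$ with $a \geq 0$, $b - a = 1$, $\lambda_P(t) := t^{2K/(d(d+1))}$, and $Af(x,r) := \int_I f(x - rP(t))\lambda_P(t)\,\mathrm{d}t$. Let $E \subset \mathbb{R}^d$, $F \subset \mathbb{R}^d\times[1,2]$ be Borel sets of finite positive measure with $\langle A\chi_E,\chi_F\rangle \ne 0$, and set $\alpha := \langle A\chi_E,\chi_F\rangle/|F|$, $\beta := \langle A\chi_E,\chi_F\rangle/|E|$, assuming $\alpha > \beta$; let $\kappa := d(d+1)/(2K + d(d+1))$. Suppose $(x_0,r_0) \in F$ and $\{\Omega_j\}_{j=1}^{d+1}$ is a type 1 tower of height $d+1$ with the following properties (with implicit constants depending only on $d$ and $K$): 1) whenever $(\mathbf{r}_j,\mathbf{t}_j) \in \Omega_j$, one has $\alpha^\kappa \lesssim t_1 < t_2 < \dots < t_j$; 2) for odd $1 \le j \le d+1$: (i) $\Phi_j(\Omega_j) \subseteq E$; (ii) $\mu_P(\Omega_1) \gtrsim \alpha$ and, if $j>1$, $\mu_P(\Omega_j(\mathbf{r}_{j-1},\mathbf{t}_{j-1})) \gtrsim \alpha$ for all $(\mathbf{r}_{j-1},\mathbf{t}_{j-1}) \in \Omega_{j-1}$; (iii) if $j>1$ and $(\mathbf{r}_j,\mathbf{t}_j)\in\Omega_j$ then $\int_{t_{j-1}}^{t_j}\lambda_P(t)\,\mathrm{d}t \gtrsim \alpha$; 3) for even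 $1 < j \le d+1$: (i) $\Phi_j(\Omega_j) \subseteq F$; (ii) $\nu_P(\Omega_j(\mathbf{r}_{j-1},\mathbf{t}_{j-1})) \gtrsim \beta$ for all $(\mathbf{r}_{j-1},\mathbf{t}_{j-1}) \in \Omega_{j-1}$; (iii) if $(\mathbf{r}_j,\mathbf{t}_j)\in\Omega_j$ then $\int_{t_{j-1}}^{t_j}\lambda_P(t)\,\mathrm{d}t \gtrsim \beta$. Then: (i) if $1 < j \le d+1$ is odd, for all $(\mathbf{r}_j,\mathbf{t}_j)\in\Omega_j$ one has $t_j - t_i \gtrsim \alpha\, t_i^{-2K/(d(d+1))}$ for $1 \le i \le j-1$; (ii) if $1 < j \le d+1$ is even, for all $(\mathbf{r}_j,\mathbf{t}_j)\in\Omega_j$ one has $t_j - t_{j-1} \gtrsim \beta\, t_{j-1}^{-2K/(d(d+1))}$ and $t_j - t_i \gtrsim \alpha\, t_i^{-2K/(d(d+1))}$ for $1 \le i \le j-2$. The implicit constants in the conclusion depend only on $d$, $K$ and those in the hypotheses.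
   Context: $\mu_P$ is the measure $\lambda_P(t)\,\mathrm{d}t$ on $I$ and $\nu_P$ is the product of Lebesgue measure on $[1,2]$ with $\mu_P$. Write $\lfloor x\rfloor$ for the integer part. A type 1 tower of height $D$ is a collection of Borel sets $\Omega_j \subseteq [1,2]^{\lfloor j/2\rfloor} \times I^j$ ($1 \le j \le D$) of positive measure, whose elements are written $(\mathbf{r}_j,\mathbf{t}_j)$ with $\mathbf{r}_j = (r_1,\dots,r_{\lfloor j/2\rfloor})$, $\mathbf{t}_j = (t_1,\dots,t_j)$, such that for $1<j\le D$, $(\mathbf{r}_j,\mathbf{t}_j)\in\Omega_j$ implies $(\mathbf{r}_{j-1},\mathbf{t}_{j-1})\in\Omega_{j-1}$. For $(\mathbf{r}_{j-1},\mathbf{t}_{j-1})\in\Omega_{j-1}$ the fibre $\Omega_j(\mathbf{r}_{j-1},\mathbf{t}_{j-1})$ is $\{t_j\in I : (\mathbf{r}_j,\mathbf{t}_j)\in\Omega_j\}$ if $j$ is odd and $\{(r_{j/2},t_j)\in[1,2]\times I : (\mathbf{r}_j,\mathbf{t}_j)\in\Omega_j\}$ if $j$ is even. Given $(x_0,r_0)$, set $\Psi_j(\mathbf{r}_j,\mathbf{t}_j) := x_0 + \sum_{k=1}^j(-1)^k r_{\lfloor k/2\rfloor}P(t_k)$ (so the $k=1$ term uses the given $r_0$), and define $\Phi_j := \Psi_j$ on $\Omega_j$ for $j$ odd and $\Phi_j(\mathbf{r}_j,\mathbf{t}_j) := (\Psi_j(\mathbf{r}_j,\mathbf{t}_j),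 r_{j/2}) \in \mathbb{R}^d\times[1,2]$ for $j$ even. $X \lesssim Y$ means $X \le CY$ for a constant $C$ as specified. *)

From mathcomp Require Import all_boot all_order all_algebra.
From mathcomp Require Import all_classical all_reals all_analysis.
Import Order.TTheory GRing.Theory Num.Theory.

Set Implicit Arguments.
Unset Strict Implicit.
Unset Printing Implicit Defensive.

Local Open Scope classical_set_scope.
Local Open Scope ring_scope.

Section Defs.
Variable R : realType.
Local Notation mu := (@lebesgue_measure R).

(* Lebesgue measure on R^n, points of R^n being n-tuples (the tuple    *)
(* type carries the product = Borel sigma-algebra).  The measure of a  *)
(* Borel set is computed as the iterated Lebesgue integral of its      *)
(* indicator (equal to the product Lebesgue measure by Tonelli).       *)
Fixpoint iint (n : nat) : (n.-tuple R -> \bar R) -> \bar R :=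
  match n return (n.-tuple R -> \bar R) -> \bar R with
  | 0 => fun f => f [tuple]
  | n'.+1 => fun f => (\int[mu]_x iint (fun v : n'.-tuple R => f [tuple of x :: v]))%E
  end.

Definition lebn (n : nat) (A : set (n.-tuple R)) : \bar R :=
  iint (fun v => (\1_A v)%:E).

Definition lebn1 (n : nat) (F : set (n.-tuple R * R)) : \bar R :=
  (\int[mu]_r lebn [set x | F (x, r)])%E.

Definition Iab (a : R) : set R := [set t | a < t < a + 1].

Definition gam (d K : nat) : R := (2 * K)%:R / (d * d.+1)%:R.
Definition lam (d K : nat) (t : R) : R := powR t (gam d K).

Definition kap (d K : nat) : R := (d * d.+1)%:R / (2 * K + d * d.+1)%:R.

Definition xmrP (d : nat) (P : 'I_d -> {poly R}) (x : d.-tuple R) (r t : R)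
  : d.-tuple R := [tuple tnth x i - r * (P i).[t] | i < d].

Definition pairing (d K : nat) (P : 'I_d -> {poly R}) (a : R)
  (E : set (d.-tuple R)) (F : set (d.-tuple R * R)) : \bar R :=
  (\int[mu]_r iint (fun x : d.-tuple R =>
     (\1_F (x, r))%:E *
     \int[mu]_(t in Iab a) ((\1_E (xmrP P x r t))%:E * (lam d K t)%:E)))%E.

Definition muP (d K : nat) (S : set R) : \bar R :=
  (\int[mu]_(t in S) (lam d K t)%:E)%E.

Definition nuP (d K : nat) (S : set (R * R)) : \bar R :=
  (\int[mu]_r \int[mu]_t ((\1_S (r, t))%:E * (lam d K t)%:E))%E.

(* Towers.  An element (r_j, t_j) of Omega_j is encoded as a pair of    *)
(* sequences (r, t) with size r = j/2 (floor) and size t = j; the       *)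
(* paper's 1-indexed coordinates are r_m = nth 0 r (m-1),               *)
(* t_k = nth 0 t (k-1).                                                 *)
Definition tco (t : seq R) (k : nat) : R := nth 0 t k.-1.
Definition rco (r0 : R) (r : seq R) (m : nat) : R :=
  if m is m'.+1 then nth 0 r m' else r0.

(* identification of R^(m+n) with R^m × R^n *)
Definition splitv (m n : nat) (v : (m + n).-tuple R) : seq R * seq R :=
  (take m v, drop m v).

Definition in_shape (a : R) (j : nat) (p : seq R * seq R) : Prop :=
  size p.1 = j./2 /\ size p.2 = j /\
  (forall x, x \in p.1 -> 1 <= x <= 2) /\ (forall x, x \in p.2 -> a < x < a + 1).

Definition type1_tower (a : R) (D : nat) (Om : nat -> set (seq R * seq R)) : Prop :=
  forall j, (1 <= j <= D)%N ->
    [/\ Om j `<=` in_shape a j,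
        measurable (@splitv j./2 j @^-1` Om j),
        (0 < lebn (@splitv j./2 j @^-1` Om j))%E &
        ((1 < j)%N -> forall p, Om j p ->
            Om j.-1 (take (j.-1)./2 p.1, take j.-1 p.2))].

Definition fibre_odd (a : R) (Omj : set (seq R * seq R)) (r t : seq R) : set R :=
  [set s | Iab a s /\ Omj (r, rcons t s)].

Definition fibre_even (a : R) (Omj : set (seq R * seq R)) (r t : seq R)
  : set (R * R) :=
  [set q | (1 <= q.1 <= 2) /\ Iab a q.2 /\ Omj (rcons r q.1, rcons t q.2)].

Definition Psi (d : nat) (P : 'I_d -> {poly R}) (x0 : d.-tuple R) (r0 : R)
  (j : nat) (r t : seq R) : d.-tuple R :=
  [tuple tnth x0 i +
         \sum_(1 <= k < j.+1) (-1) ^+ k * rco r0 r k./2 * (P i).[tco t k]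
  | i < d].

End Defs.

(* Let s = t_i < t_j = w and let [u, v] = [t_(k-1), t_k], with i < k <= j, be
   an interval of mu_P-mass >~ x, where x = alpha for k odd and x = beta for k
   even; for even j and i <= j - 2 one takes k = j - 1, using the truncation of
   the point to Omega_(j-1).  Since lambda_P is increasing, x <~ (v - u) v^gamma.
   If w <= 2s, then v - u <= w - s and v^gamma <= (2s)^gamma, so
   w - s >~ x s^(-gamma).  If w > 2s, then w - s >= s = s^(1 + gamma) s^(-gamma),
   and t_1 >~ alpha^kappa gives s^(1 + gamma) >~ alpha^(kappa (1 + gamma)) = alpha
   >= x. *)
From mathcomp Require Import all_boot all_order all_algebra.
From mathcomp Require Import all_classical all_reals all_analysis.
From mathcomp Require Import measurable_realfun zify ring lra.
Import Order.TTheory GRing.Theory Num.Theory.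

Set Implicit Arguments.
Unset Strict Implicit.
Unset Printing Implicit Defensive.
Local Open Scope classical_set_scope.
Local Open Scope ring_scope.

Lemma gam_ge0 (R : realType) d K : 0 <= gam R d K.
Proof. by rewrite /gam divr_ge0. Qed.

Lemma kap_mul1Dgam (R : realType) d K : (0 < d)%N ->
  kap R d K * (1 + gam R d K) = 1.
Proof.
move=> d0; rewrite /kap /gam.
have dp : 0 < d%:R :> R by rewrite ltr0n.
have K0 : 0 <= K%:R :> R by [].
by field; apply/and3P; split; rewrite gt_eqF //; nra.
Qed.

Lemma muP_itv_le (R : realType) d K (u v : R) : 0 <= u -> u <= v ->
  (muP d K [set t | (u <= t <= v)%R] <= ((v - u) * powR v (gam R d K))%:E)%E.
Proof.
move=> u0 uv.
have -> : [set t | (u <= t <= v)%R] = [set` `[u, v]] :> set R.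
  by apply/seteqP; split => t /=; rewrite in_itv.
apply: (@le_trans _ _ (\int[lebesgue_measure]_(x in [set` `[u, v]])
                         (cst (powR v (gam R d K))%:E) x)%E).
  apply: ge0_le_integral => //.
  - by move=> x _; rewrite lee_fin /lam powR_ge0.
  - by apply/measurable_EFinP; exact: measurable_funS (measurable_powR _).
  move=> x /=; rewrite in_itv /= => /andP[ux xv]; rewrite lee_fin /lam.
  by apply: ge0_ler_powR; rewrite ?gam_ge0 ?nnegrE ?(le_trans u0).
rewrite integral_cst //= lebesgue_measure_itv /=.
case: ltP => [_|vu]; first by rewrite -EFinD -EFinM mulrC.
by rewrite mule0 lee_fin mulr_ge0 ?powR_ge0 ?subr_ge0.
Qed.

Section GapBound.
Variables (R : realType) (g : R).
Hypothesis g_ge0 : 0 <= g.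

Lemma gap_bound_near (c x s u v w : R) :
  0 < s -> s <= u -> u <= v -> v <= w -> w <= 2 * s ->
  c * x <= (v - u) * powR v g -> c / powR 2 g * x <= (w - s) * powR s g.
Proof.
move=> s0 su uv vw ws hc.
have v0 : 0 <= v by rewrite (le_trans (ltW s0)) ?(le_trans su).
have : c * x <= (w - s) * powR (2 * s) g.
  apply: (le_trans hc); apply: ler_pM; rewrite ?powR_ge0 ?subr_ge0 ?lerB //.
  by apply: ge0_ler_powR; rewrite ?nnegrE ?mulr_ge0 ?(ltW s0) ?(le_trans vw).
rewrite powRM ?ler0n ?(ltW s0) // => h.
by rewrite mulrAC ler_pdivrMr ?powR_gt0 // -mulrA [_ `^ g * _]mulrC.
Qed.

Lemma gap_bound_far (k c1 al x s w : R) : k * (1 + g) = 1 ->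
  0 < c1 -> 0 <= x -> x <= al -> c1 * powR al k <= s -> 2 * s < w ->
  powR c1 (1 + g) * x <= (w - s) * powR s g.
Proof.
move=> kg c10 x0 xal sl ws.
have al0 : 0 <= al by rewrite (le_trans x0).
have sl0 : 0 <= c1 * powR al k by rewrite mulr_ge0 ?powR_ge0 ?(ltW c10).
have s0 : 0 <= s := le_trans sl0 sl.
have sws : s <= w - s by rewrite lerBrDl -mulr2n -mulr_natl ltW.
apply: (le_trans _ (ler_wpM2r (powR_ge0 _ _) sws)).
have -> : s * powR s g = powR s (1 + g).
  have [->|s_neq0] := eqVneq s 0; first by rewrite mul0r powR0 // gt_eqF ?ltr_wpDr.
  by rewrite powRD ?powRr1 ?s_neq0 ?implybT.
have sl_pow : powR (c1 * powR al k) (1 + g) <= powR s (1 + g).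
  by apply: ge0_ler_powR; rewrite ?nnegrE ?addr_ge0.
apply: le_trans sl_pow.
rewrite powRM ?powR_ge0 ?(ltW c10) // -powRrM kg powRr1 //.
by rewrite ler_wpM2l ?powR_ge0.
Qed.

Lemma gap_bound (k C c c1 al x s u v w : R) : k * (1 + g) = 1 ->
  0 < c1 -> C <= c / powR 2 g -> C <= powR c1 (1 + g) ->
  0 <= x -> x <= al -> c1 * powR al k <= s -> 0 < s ->
  s <= u -> u <= v -> v <= w ->
  c * x <= (v - u) * powR v g -> C * x * powR s (- g) <= w - s.
Proof.
move=> kg c10 Cc Cc1 x0 xal sl s0 su uv vw hc.
rewrite powRN ler_pdivrMr ?powR_gt0 //.
have [ws|ws] := leP w (2 * s).
  exact: le_trans (ler_wpM2r x0 Cc) (gap_bound_near s0 su uv vw ws hc).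
exact: le_trans (ler_wpM2r x0 Cc1) (gap_bound_far kg c10 x0 xal sl ws).
Qed.

End GapBound.

Section IncreasingCoordinates.
Variables (R : realType) (t : seq R) (j : nat).
Hypothesis t_incr : forall k, (1 <= k < j)%N -> tco t k < tco t k.+1.

Lemma tco_lt i l : (1 <= i)%N -> (i < l <= j)%N -> tco t i < tco t l.
Proof.
move=> i1; elim: l => [|l IH] /andP[il lj] //.
have [->|ne] := eqVneq i l; first by apply: t_incr; lia.
by apply: lt_trans (IH _) (t_incr _); lia.
Qed.

Lemma tco_le i l : (1 <= i)%N -> (i <= l <= j)%N -> tco t i <= tco t l.
Proof.
move=> i1 il; have [->|ne] := eqVneq i l; first by [].
by apply/ltW/tco_lt; lia.
Qed.

End IncreasingCoordinates.

Lemma tco_take (R : realType) (t : seq R) n k : (1 <= k <= n)%N ->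
  tco (take n t) k = tco t k.
Proof. by move=> kn; rewrite /tco nth_take //; lia. Qed.

Lemma exists_gap_constant (R : realType) (g c c' c1 : R) :
  0 < c -> 0 < c' -> 0 < c1 ->
  exists2 C, 0 < C & [/\ C <= c / powR 2 g, C <= c' / powR 2 g & C <= powR c1 (1 + g)].
Proof.
move=> c0 c'0 c10; exists (Num.min (Num.min c c' / powR 2 g) (powR c1 (1 + g))).
  by rewrite lt_min divr_gt0 ?powR_gt0 // lt_min c0.
by rewrite !ge_min !ler_pM2r ?invr_gt0 ?powR_gt0 // !ge_min !lexx !orbT.
Qed.

Lemma tower_gap_bound (R : realType) d K (C c c1 al x : R) (t : seq R) i k j :
  (0 < d)%N -> 0 <= C -> 0 < c1 -> C <= c / powR 2 (gam R d K) ->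
  C <= powR c1 (1 + gam R d K) -> x <= al ->
  (forall l, (1 <= l < j)%N -> tco t l < tco t l.+1) ->
  c1 * powR al (kap R d K) <= tco t 1 -> (1 <= i <= k.-1)%N -> (k <= j)%N ->
  ((c * x)%:E <= muP d K [set s | (tco t k.-1 <= s <= tco t k)%R])%E ->
  C * x * powR (tco t i) (- gam R d K) <= tco t j - tco t i.
Proof.
move=> d0 C0 c10 Cc Cc1 xal t_incr t1 /andP[i1 ik1] kj hmu.
have t_le := tco_le t_incr.
have k1k : (k.-1 <= k)%N := leq_pred k.
have ij : (i <= j)%N := leq_trans ik1 (leq_trans k1k kj).
have [x0|x_gt0] := leP x 0.
  apply: (@le_trans _ _ 0); last by rewrite subr_ge0 t_le ?i1 ?ij ?leqnn.
  by rewrite -mulrA mulr_ge0_le0 // mulr_le0_ge0 ?powR_ge0.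
have t1i : tco t 1 <= tco t i by rewrite t_le ?i1 ?ij.
have ti0 : 0 < tco t i.
  apply: lt_le_trans t1i; apply: lt_le_trans t1.
  by rewrite mulr_gt0 // powR_gt0 // (lt_le_trans x_gt0).
have tik1 : tco t i <= tco t k.-1 by rewrite t_le ?i1 ?ik1 ?(leq_trans k1k kj).
have tk1k : tco t k.-1 <= tco t k by rewrite t_le ?k1k ?kj ?(leq_trans i1 ik1).
apply: (gap_bound (gam_ge0 R d K) (kap_mul1Dgam R K d0) c10 Cc Cc1 (ltW x_gt0)
  xal (le_trans t1 t1i) ti0 tik1 tk1k).
  by rewrite t_le ?kj ?leqnn ?(leq_trans i1 (leq_trans ik1 k1k)).
rewrite -lee_fin; apply: le_trans hmu (muP_itv_le _ _ _ tk1k).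
exact: le_trans (ltW ti0) tik1.
Qed.

Theorem corollary5p5 (R : realType) (d K : nat) :
  (2 <= d)%N ->
  forall c1 c2 c3 c4 c5 : R,
  0 < c1 -> 0 < c2 -> 0 < c3 -> 0 < c4 -> 0 < c5 ->
  exists C : R, 0 < C /\
  forall (P : 'I_d -> {poly R}) (a : R) (E : set (d.-tuple R))
         (F : set (d.-tuple R * R)) (x0 : d.-tuple R) (r0 : R)
         (Om : nat -> set (seq R * seq R)),
  0 <= a ->
  measurable E -> (0 < lebn E < +oo)%E ->
  measurable F -> F `<=` [set p | 1 <= p.2 <= 2] -> (0 < lebn1 F < +oo)%E ->
  pairing K P a E F != 0%E ->
  let alpha := fine (pairing K P a E F) / fine (lebn1 F) in
  let beta := fine (pairing K P a E F) / fine (lebn E) in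
  beta < alpha ->
  F (x0, r0) ->
  type1_tower a d.+1 Om ->
  (* property 1) *)
  (forall j, (1 <= j <= d.+1)%N -> forall p, Om j p ->
     c1 * powR alpha (kap R d K) <= tco p.2 1 /\
     (forall k, (1 <= k < j)%N -> tco p.2 k < tco p.2 k.+1)) ->
  (* property 2), j odd *)
  (forall j, (1 <= j <= d.+1)%N -> odd j ->
     [/\ forall p, Om j p -> E (Psi P x0 r0 j p.1 p.2),
         j = 1%N -> ((c2 * alpha)%:E <= muP d K [set s | Om 1%N ([::], [:: s])])%E,
         (1 < j)%N -> (forall p, Om j.-1 p ->
            ((c2 * alpha)%:E <= muP d K (fibre_odd a (Om j) p.1 p.2))%E) &
         (1 < j)%N -> (forall p, Om j p ->
            ((c3 * alpha)%:E <=
               muP d K [set t | (tco p.2 j.-1 <= t <= tco p.2 j)%R])%E)]) ->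
  (* property 3), j even *)
  (forall j, (1 < j <= d.+1)%N -> ~~ odd j ->
     [/\ forall p, Om j p -> F (Psi P x0 r0 j p.1 p.2, rco r0 p.1 j./2),
         forall p, Om j.-1 p ->
            ((c4 * beta)%:E <= nuP d K (fibre_even a (Om j) p.1 p.2))%E &
         forall p, Om j p ->
            ((c5 * beta)%:E <=
               muP d K [set t | (tco p.2 j.-1 <= t <= tco p.2 j)%R])%E]) ->
  (* conclusion (i) *)
  (forall j, (1 < j <= d.+1)%N -> odd j -> forall p, Om j p ->
     forall i, (1 <= i <= j.-1)%N ->
       C * alpha * powR (tco p.2 i) (- gam R d K) <= tco p.2 j - tco p.2 i) /\
  (* conclusion (ii) *)
  (forall j, (1 < j <= d.+1)%N -> ~~ odd j -> forall p, Om j p ->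
     C * beta * powR (tco p.2 j.-1) (- gam R d K) <= tco p.2 j - tco p.2 j.-1 /\
     (forall i, (1 <= i <= j - 2)%N ->
       C * alpha * powR (tco p.2 i) (- gam R d K) <= tco p.2 j - tco p.2 i)).
Proof.
move=> d2 c1 c2 c3 c4 c5 c10 _ c30 _ c50.
have d0 : (0 < d)%N := ltnW d2.
have [C C0 [Cc3 Cc5 Cc1]] := exists_gap_constant (gam R d K) c30 c50 c10.
exists C; split=> // P a E F x0 r0 Om _ _ _ _ _ _ _ alpha beta ba _ tower t_props odd_step even_step.
split=> j /[dup] /andP[j1 jd] j_range' j_parity p Hp;
  (have j_range : (1 <= j <= d.+1)%N by rewrite (ltnW j1) jd);
  have [t1 t_incr] := t_props j j_range p Hp.
  have [_ _ _ hmu] := odd_step j j_range j_parity.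
  move=> i ij.
  apply: (tower_gap_bound d0 (ltW C0) c10 Cc3 Cc1 (lexx alpha) t_incr t1 ij (leqnn j)).
  exact: hmu.
have [_ _ hmu_beta] := even_step j j_range' j_parity.
split.
  apply: (tower_gap_bound d0 (ltW C0) c10 Cc5 Cc1 (ltW ba) t_incr t1 _ (leqnn j)).
    by rewrite ltn_predRL j1 /=.
  exact: hmu_beta.
move=> i; rewrite subn2 => /[dup] i_range /andP[i1 i2].
have [_ _ _ restrict] := tower j j_range.
have j1_range : (1 <= j.-1 <= d.+1)%N by rewrite ltn_predRL j1 (leq_trans (leq_pred j) jd).
have j1_odd : odd j.-1 by rewrite -(prednK (ltnW j1)) /= negbK in j_parity.
have j2 : (1 < j.-1)%N by rewrite -ltn_predRL (leq_trans i1 i2).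
have [_ _ _ hmu] := odd_step j.-1 j1_range j1_odd.
have := hmu j2 _ (restrict j1 p Hp).
rewrite /= !tco_take ?leq_pred ?leqnn ?(leq_trans i1 i2) ?(ltnW j2) // => hmu_alpha.
exact: (tower_gap_bound d0 (ltW C0) c10 Cc3 Cc1 (lexx alpha) t_incr t1 i_range (leq_pred j) hmu_alpha).
Qed.
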